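(* Let $N$ be a positive integer, $x\in\mathbb{T}$ irrational, and $D=\{x,2x,\dots,Nx\}$. Then $\mathrm{Md}_{\mathbb{T}}(D)\le 1/(N+1)$, and there is no Borel set $A\subset\mathbb{T}$ with $(A-A)\cap D=\emptyset$ and $\mu(A)=1/(N+1)$.
   Context: $\mathbb{T}=\mathbb{R}/\mathbb{Z}$ with Haar probability measure $\mu$; ''$x$ irrational'' means $x\notin\mathbb{Q}/\mathbb{Z}$. $\mathrm{Md}_{\mathbb{T}}(D)=\sup\{\mu(A): A\subset\mathbb{T}\text{ Borel},\ (A-A)\cap D=\emptyset\}$. *)

From HB Require Import structures.
From mathcomp Require Import all_boot all_order all_algebra.
From mathcomp Require Import all_classical all_reals all_analysis.
Set Implicit Arguments. Unset Strict Implicit. Unset Printing Implicit Defensive.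
Import Order.TTheory GRing.Theory Num.Theory.
Local Open Scope classical_set_scope.
Local Open Scope ring_scope.

(* The circle T = R/Z is modelled by the fundamental domain [0,1) in R:
   a point of T is its unique representative in [0,1), the projection
   R -> T is [frac], subtraction in T is [frac (a - b)], Borel subsets of
   T are Borel subsets of R contained in [0,1), and the Haar probability
   measure on T is Lebesgue measure restricted to [0,1). *)

Definition frac {R : realType} (x : R) : R := x - (Num.floor x)%:~R.

Definition irrationalT {R : realType} (x : R) : Prop :=
  forall q : rat, x != ratr q.

Definition Dset {R : realType} (N : nat) (x : R) : set R :=
  [set frac (k%:R * x) | k in [set k : nat | (1 <= k <= N)%N]].

Definition admissible {R : realType} (D : set R) (A : set (measurableTypeR R)) : Prop :=
  measurable A /\ A `<=` (`[(0:R), (1:R)[) /\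
  (forall a b, A a -> A b -> ~ D (frac (a - b))).

Definition MdT {R : realType} (D : set R) : \bar R :=
  ereal_sup [set (@lebesgue_measure R A) | A in admissible D].

From HB Require Import structures.
From mathcomp Require Import all_boot all_order all_algebra.
From mathcomp Require Import all_classical all_reals all_analysis.
From mathcomp Require Import measurable_realfun lebesgue_integral_differentiation.
From mathcomp Require Import ring lra zify.
Set Implicit Arguments. Unset Strict Implicit. Unset Printing Implicit Defensive.
Import Order.TTheory GRing.Theory Num.Theory numFieldNormedType.Exports.
Local Open Scope classical_set_scope.
Local Open Scope ring_scope.

(* The rotations A + kx (0 <= k <= N) of an admissible A are pairwise disjoint
   in T, since two of them differ by a rotation in D; hence (N + 1) mu(A) <= 1.
   If equality held they would tile T up to a null set, and A + (N + 1)x, which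
   misses A + kx for 1 <= k <= N, would coincide with A almost everywhere.  Then
   A is a.e. invariant under the translations by the dense group
   Z (N + 1)x + Z, so a point of density 1 of A could be moved next to a point
   of density 0, which the Lebesgue density theorem forbids. *)

Local Notation mR R := (measurableTypeR R).

Lemma measureD_eq0C d (T : measurableType d) (K : realFieldType)
    (mu : {measure set T -> \bar K}) (A B : set T) :
  measurable A -> measurable B -> mu A = mu B -> (mu A < +oo)%E ->
  mu (B `\` A) = 0%E -> mu (A `\` B) = 0%E.
Proof.
move=> mA mB AB Afin; have Bfin : (mu B < +oo)%E by rewrite -AB.
by rewrite !measureD // (setIC A) => <-; congr (_ - _)%E.
Qed.

Lemma le_measure_setI_negligibleD d (T : measurableType d) (K : realFieldType)
    (mu : {measure set T -> \bar K}) (S U X : set T) :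
  measurable S -> measurable U -> measurable X -> mu.-negligible (S `\` U) ->
  (mu (S `&` X) <= mu (U `&` X))%E.
Proof.
move=> mS mU mX [M [mM M0 SUM]].
have mSX : measurable (S `&` X) by exact: measurableI.
have mUX : measurable (U `&` X) by exact: measurableI.
apply: (@le_trans _ _ (mu ((U `&` X) `|` M))).
  apply: le_measure; rewrite ?inE //; first exact: measurableU.
  by move=> z [Sz Xz]; have [Uz|nUz] := pselect (U z); [left | right; apply: SUM].
by rewrite (le_trans (measureU2 _ _ _)) //= M0 adde0.
Qed.

Lemma negligible_bigcup_int d (T : sigmaRingType d) (K : realFieldType)
    (mu : {measure set T -> \bar K}) (F : int -> set T) :
  (forall m, mu.-negligible (F m)) -> mu.-negligible (\bigcup_m F m).
Proof.
move=> F0; apply: (negligibleS _ (negligible_bigcup (fun n =>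
  negligibleU (F0 (Posz n)) (F0 (Negz n))))).
by move=> z [[n|n] _ Fz]; exists n => //; [left | right].
Qed.

Section translation.
Context {R : realType}.

Definition translate (s : R) (B : set R) : set R := [set z | B (z - s)].

Lemma measurable_translate s (B : set (mR R)) :
  measurable B -> measurable (translate s B : set (mR R)).
Proof.
move=> mB; rewrite -[translate s B]setTI.
have mBs : measurable_fun [set: mR R] (fun z : R => z - s).
  exact: (measurable_funB (@measurable_id _ _ setT) (measurable_cst s)).
exact: (mBs measurableT B mB).
Qed.

Lemma translateD s t (B : set R) : translate s (translate t B) = translate (s + t) B.
Proof. by apply/seteqP; split => z; rewrite /translate /= opprD addrA. Qed.

Lemma translate0 (B : set R) : translate 0 B = B.
Proof. by apply/seteqP; split => z; rewrite /translate /= subr0. Qed.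

Lemma translateI s (B C : set R) :
  translate s (B `&` C) = translate s B `&` translate s C.
Proof. by []. Qed.

Lemma translate_itv s (a b : R) (ba bb : bool) :
  translate s [set` Interval (BSide ba a) (BSide bb b)] =
  [set` Interval (BSide ba (a + s)) (BSide bb (b + s))].
Proof.
by apply/seteqP; split => z; rewrite /translate /= !in_itv /=;
  case: ba; case: bb => /=; lra.
Qed.

Definition lebesgue_translate (s : R) (B : set (mR R)) : \bar R :=
  lebesgue_measure (translate s B).

End translation.

Section lebesgue_translate_measure.
Context {R : realType} (s : R).

Let lebesgue_translate0 : lebesgue_translate s set0 = 0%E.
Proof. exact: measure0. Qed.

Let lebesgue_translate_ge0 B : (0 <= lebesgue_translate s B)%E.
Proof. exact: measure_ge0. Qed.

Let lebesgue_translate_sigma_additive : semi_sigma_additive (lebesgue_translate s).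
Proof.
move=> F mF tF mUF; apply: (@measure_semi_sigma_additive _ _ _ lebesgue_measure
  (fun n => translate s (F n))) => //.
- by move=> n; exact: measurable_translate.
- apply/trivIsetP => i j _ _ ij; move/trivIsetP: tF => /(_ i j I I ij) Fij.
  apply/seteqP; split => // z Fz.
  by have : (F i `&` F j) (z - s) by []; rewrite Fij.
- exact: (measurable_translate s mUF).
Qed.

HB.instance Definition _ := isMeasure.Build _ _ _ (lebesgue_translate s)
  lebesgue_translate0 lebesgue_translate_ge0 lebesgue_translate_sigma_additive.

End lebesgue_translate_measure.

Section translation_invariance.
Context {R : realType}.
Local Notation mu := (@lebesgue_measure R).

Lemma lebesgue_measure_translate s (B : set (mR R)) :
  measurable B -> lebesgue_measure (translate s B) = lebesgue_measure B.
Proof.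
move=> mB; apply/esym.
apply: (@lebesgue_measure_unique R (lebesgue_translate s) _ B mB).
move=> _ [[a b] _ <-]; rewrite /= /lebesgue_translate (translate_itv s a b false false).
by rewrite !lebesgue_measure_itv /= !lte_fin ltrD2r -!EFinD opprD addrACA subrr addr0.
Qed.

Lemma translate_ball (t p r : R) :
  translate t (ball p r : set (mR R)) = ball (p + t) r.
Proof.
apply/seteqP; split => z; rewrite /translate /ball /=;
  by rewrite (_ : p - (z - t) = p + t - z) //; ring.
Qed.

Lemma negligible_translate t (M : set (mR R)) :
  mu.-negligible M -> mu.-negligible (translate t M).
Proof.
move=> [B [mB B0 MB]]; exists (translate t B); split => //.
- exact: measurable_translate.
- by rewrite lebesgue_measure_translate.
- by move=> z; apply: MB.
Qed.

End translation_invariance.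

Section fractional_part.
Context {R : realType}.
Implicit Types z r : R.

Lemma frac_ge0 z : 0 <= frac z.
Proof. by rewrite /frac subr_ge0 floor_le. Qed.

Lemma frac_lt1 z : frac z < 1.
Proof. by rewrite /frac ltrBlDl -intrD1 floorD1_gt. Qed.

Lemma frac_id z : 0 <= z < 1 -> frac z = z.
Proof. by move=> z01; rewrite /frac (floor_def (m := 0)) ?subr0 ?add0r. Qed.

Lemma subr_frac_int z : z - frac z \is a Num.int.
Proof. by rewrite /frac opprB addrCA subrr addr0 intr_int. Qed.

Lemma fracDr_int z r : r \is a Num.int -> frac (z + r) = frac z.
Proof.
move=> r_int; rewrite /frac floorDrz // intrD (floorK r_int).
by rewrite opprD addrACA subrr addr0.
Qed.

Lemma frac_eqP z r : frac z = frac r <-> z - r \is a Num.int.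
Proof.
split=> [zr | zr_int]; last by rewrite -(fracDr_int r zr_int) addrC subrK.
have -> : z - r = (z - frac z) - (r - frac r) by rewrite zr; ring.
exact: rpredB (subr_frac_int z) (subr_frac_int r).
Qed.

Lemma frac_frac z : frac (frac z) = frac z.
Proof. by rewrite frac_id // frac_ge0 frac_lt1. Qed.

Lemma frac_fracD z r : frac (frac z + r) = frac (z + r).
Proof.
have -> : frac z + r = z + r + (- Num.floor z)%:~R by rewrite /frac mulrNz; ring.
by rewrite fracDr_int ?intr_int.
Qed.

Lemma frac_shift1 (z : R) : 1 <= z < 2 -> frac z = z - 1.
Proof.
move=> z12; rewrite -[in LHS](subrK 1 z) fracDr_int ?rpred1 // frac_id //; lra.
Qed.

End fractional_part.

Section periodization.
Context {R : realType}.
Implicit Types (A : set (mR R)) (c t : R).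

Definition periodize A : set (mR R) := [set z | A (frac z)].

Lemma translate_periodize_int A r : r \is a Num.int ->
  translate r (periodize A) = periodize A.
Proof.
move=> r_int; have Nr_int : - r \is a Num.int by rewrite rpredN.
by apply/seteqP; split => z; rewrite /translate /periodize /= (fracDr_int _ Nr_int).
Qed.

Lemma periodize_bigcup A : A `<=` `[0, 1[ ->
  periodize A = \bigcup_(m : int) translate m%:~R A.
Proof.
move=> A01; apply/seteqP; split => z /=.
  by move=> Afz; exists (Num.floor z).
move=> [m _ Azm]; have /A01 := Azm; rewrite /= in_itv /= => zm01.
by rewrite /periodize /= -(@fracDr_int _ z (- m)%:~R) ?intr_int // mulrNz frac_id.
Qed.

Lemma measurable_periodize A : measurable A -> A `<=` `[0, 1[ ->
  measurable (periodize A).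
Proof.
move=> mA A01; rewrite periodize_bigcup //.
apply: countable_bigcupT_measurable => // m.
exact: measurable_translate.
Qed.

Lemma periodizeI01 A : A `<=` `[0, 1[ -> periodize A `&` `[0, 1[ = A.
Proof.
move=> A01; apply/seteqP; split => z /=.
  by move=> [Afz]; rewrite in_itv /= => z01; rewrite -(frac_id z01).
move=> Az; have := A01 _ Az; rewrite /= in_itv /= => z01.
by split; rewrite /periodize /= ?frac_id // in_itv.
Qed.

Lemma measure_periodize_window01 A d : measurable A -> A `<=` `[0, 1[ ->
  0 <= d < 1 ->
  lebesgue_measure (periodize A `&` `[d, d + 1[) = lebesgue_measure A.
Proof.
move=> mA A01 d01.
have mAI (a b : R) : measurable (A `&` `[a, b[) by exact: measurableI.
have window_split : periodize A `&` `[d, d + 1[ =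
    (A `&` `[d, 1[) `|` translate 1 (A `&` `[0, d[).
  apply/seteqP; split => z /=; rewrite /translate /periodize /= !in_itv /=.
    move=> [Afz zd]; have [z1|z1] := ltP z 1.
      have fz : frac z = z by apply: frac_id; lra.
      by left; split; [rewrite -fz | lra].
    have fz : frac z = z - 1 by apply: frac_shift1; lra.
    by right; split; [rewrite -fz | lra].
  move=> [[Az zd]|[Az zd]].
    have fz : frac z = z by apply: frac_id; lra.
    by split; [rewrite fz | lra].
  have fz : frac z = z - 1 by apply: frac_shift1; lra.
  by split; [rewrite fz | lra].
have A_split : A = (A `&` `[d, 1[) `|` (A `&` `[0, d[).
  apply/seteqP; split => [z Az|z [[]|[]] //]; have := A01 _ Az.
  rewrite /= !in_itv /= => z01.
  by have [zd|zd] := ltP z d; [right|left]; split => //; rewrite ?andbT; lra.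
rewrite window_split measureU //=; first last.
- by apply/seteqP; split => // z [[_]]; rewrite /translate /= !in_itv /= => ? [_]; lra.
- exact: measurable_translate.
rewrite lebesgue_measure_translate // {3}A_split measureU //.
by apply/seteqP; split => // z [[_]]; rewrite /= !in_itv /= => ? [_]; lra.
Qed.

Lemma measure_periodize_window A c : measurable A -> A `<=` `[0, 1[ ->
  lebesgue_measure (periodize A `&` `[c, c + 1[) = lebesgue_measure A.
Proof.
move=> mA A01; set n : R := (Num.floor c)%:~R.
rewrite -(measure_periodize_window01 (d := frac c) mA A01); last first.
  by rewrite frac_ge0 frac_lt1.
rewrite -[in RHS](lebesgue_measure_translate n); last first.
  by apply: measurableI => //; exact: measurable_periodize.
rewrite translateI translate_periodize_int ?intr_int // (translate_itv _ _ _ true true).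
have -> : frac c + 1 + n = c + 1 by rewrite addrAC /frac subrK.
by have -> : frac c + n = c by rewrite /frac subrK.
Qed.

Definition rotate t A : set (mR R) := `[0, 1[ `&` translate t (periodize A).

Lemma measurable_rotate t A : measurable A -> A `<=` `[0, 1[ ->
  measurable (rotate t A).
Proof.
move=> mA A01; apply: measurableI => //.
by apply: measurable_translate; exact: measurable_periodize.
Qed.

Lemma measure_rotate t A : measurable A -> A `<=` `[0, 1[ ->
  lebesgue_measure (rotate t A) = lebesgue_measure A.
Proof.
move=> mA A01; rewrite -(measure_periodize_window (- t) mA A01).
rewrite -[in RHS](lebesgue_measure_translate t); last first.
  by apply: measurableI => //; exact: measurable_periodize.
rewrite translateI (translate_itv _ _ _ true true) setIC.
by rewrite addNr addrAC addNr add0r.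
Qed.

Lemma lebesgue_measure01 : lebesgue_measure (`[0%R, 1%R[ : set (mR R)) = 1%E.
Proof. by rewrite lebesgue_measure_itv /= lte_fin ltr01 sube0. Qed.

Lemma rotate0 A : A `<=` `[0, 1[ -> rotate 0 A = A.
Proof. by move=> A01; rewrite /rotate translate0 setIC periodizeI01. Qed.

End periodization.

Section ae_periods.
Context {R : realType}.
Local Notation mu := (@lebesgue_measure R).

Definition ae_period (P : set (mR R)) t :=
  mu.-negligible ((translate t P `\` P) `|` (P `\` translate t P)).

Implicit Types (P : set (mR R)) (s t : R).

Lemma ae_period0 P : ae_period P 0.
Proof. by rewrite /ae_period translate0 setDv setU0; exact: negligible_set0. Qed.

Lemma ae_periodD P s t : ae_period P s -> ae_period P t -> ae_period P (s + t).
Proof.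
move=> Ps Pt; apply: (negligibleS _ (negligibleU (negligible_translate s Pt) Ps)).
move=> z; rewrite -translateD /translate /=.
by case: (pselect (P (z - s))) => Pzs; tauto.
Qed.

Lemma ae_periodN P t : ae_period P t -> ae_period P (- t).
Proof.
move=> Pt; apply: (negligibleS _ (negligible_translate (- t) Pt)).
by move=> z; rewrite /translate /= !opprK addrK; tauto.
Qed.

Lemma ae_periodMz P t (k : int) : ae_period P t -> ae_period P (k%:~R * t).
Proof.
move=> Pt; have Pnt (n : nat) : ae_period P (n%:R * t).
  elim: n => [|n IHn]; first by rewrite mul0r; exact: ae_period0.
  by rewrite mulrSr mulrDl mul1r; exact: ae_periodD.
by case: k => n; rewrite ?NegzE ?mulrNz ?mulNr; [exact: Pnt | exact/ae_periodN/Pnt].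
Qed.

Lemma ae_period_ball P t p r : measurable P -> ae_period P t ->
  mu (P `&` ball (p + t) r) = mu (P `&` ball p r).
Proof.
move=> mP Pt; have mB c : measurable (ball c r : set (mR R)) by exact: measurable_ball.
have mPt : measurable (translate t P) by exact: measurable_translate.
rewrite -[in RHS](lebesgue_measure_translate t); last exact: measurableI.
rewrite translateI translate_ball; apply/le_anti/andP; split.
  by apply: le_measure_setI_negligibleD => //; apply: negligibleS Pt => z; right.
by apply: le_measure_setI_negligibleD => //; apply: negligibleS Pt => z; left.
Qed.

End ae_periods.

Section density.
Context {R : realType}.
Local Notation mu := (@lebesgue_measure R).
Implicit Types (P : set (mR R)) (z c l : R).

Let density_ratio P z r := (mu (P `&` ball z r) * (mu (ball z r))^-1)%E.

Lemma exists_density_point P (S : set (mR R)) : measurable P -> ~ mu.-negligible S ->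
  exists2 z : R, S z & density_ratio P z r @[r --> 0^'+] --> (\1_P z)%:E.
Proof.
move=> mP nS; apply: contrapT => nz; apply: nS.
by apply: negligibleS (lebesgue_density mP) => z Sz dz; apply: nz; exists z.
Qed.

Lemma measure_setI_ball_fin P z r : measurable P -> 0 <= r ->
  mu (P `&` ball z r) \is a fin_num.
Proof.
move=> mP r_ge0; have mB : measurable (ball z r : set (mR R)) by exact: measurable_ball.
rewrite ge0_fin_numE // (@le_lt_trans _ _ (mu (ball z r))) //.
  by apply: le_measure; rewrite ?inE //; exact: measurableI.
by rewrite lebesgue_measure_ball // ltry.
Qed.

Lemma density_ratioE P z r : measurable P -> 0 < r ->
  density_ratio P z r = (fine (mu (P `&` ball z r)) / (r *+ 2))%:E.
Proof.
move=> mP r_gt0; have r2_gt0 : 0 < r *+ 2 by rewrite mulrn_wgt0.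
rewrite /density_ratio lebesgue_measure_ball ?ltW //.
rewrite -{1}(fineK (measure_setI_ball_fin z mP (ltW r_gt0))).
by rewrite inver gt_eqF // -EFinM.
Qed.

Lemma near_right0 (Q : R -> Prop) : (\forall r \near 0^'+, Q r) ->
  exists2 e : R, 0 < e & forall r, 0 < r < e -> Q r.
Proof.
move=> /nbhs_ballP [e /= e_gt0 eQ]; exists e => // r /andP[r_gt0 re].
by apply: eQ; rewrite // /ball /= sub0r normrN gtr0_norm.
Qed.

Lemma density_ratio_gt P z l c : measurable P ->
  density_ratio P z r @[r --> 0^'+] --> l%:E -> c < l ->
  exists2 e, 0 < e & forall r, 0 < r < e -> c * (r *+ 2) < fine (mu (P `&` ball z r)).
Proof.
move=> mP dz cl.
have /near_right0 [e e_gt0 eP] := dz _ (open_ereal_gt' (cl : c%:E < l%:E)%E).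
exists e => // r /[dup] /andP[r_gt0 _] /eP /=.
by rewrite density_ratioE // lte_fin ltr_pdivlMr // mulrn_wgt0.
Qed.

Lemma density_ratio_lt P z l c : measurable P ->
  density_ratio P z r @[r --> 0^'+] --> l%:E -> l < c ->
  exists2 e, 0 < e & forall r, 0 < r < e -> fine (mu (P `&` ball z r)) < c * (r *+ 2).
Proof.
move=> mP dz lc.
have /near_right0 [e e_gt0 eP] := dz _ (open_ereal_lt' (lc : l%:E < c%:E)%E).
exists e => // r /[dup] /andP[r_gt0 _] /eP /=.
by rewrite density_ratioE // lte_fin ltr_pdivrMr // mulrn_wgt0.
Qed.

Lemma dense_ae_periods_trivial P : measurable P ->
  (forall c r, 0 < r -> exists2 t, ae_period P t & `|t - c| < r) ->
  mu.-negligible P \/ mu.-negligible (~` P).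
Proof.
move=> mP dense; apply: contrapT => /not_orP[nP nPc].
have [p Pp] := exists_density_point mP nP; rewrite indicE mem_set // => dp.
have [q nPq] := exists_density_point mP nPc; rewrite indicE memNset // => dq.
have lt341 : (3 / 4 : R) < 1 by lra.
have lt014 : (0 : R) < 1 / 4 by lra.
have [e1 e1_gt0 dense_p] := density_ratio_gt mP dp lt341.
have [e2 e2_gt0 sparse_q] := density_ratio_lt mP dq lt014.
have [r [r_gt0 re1 re2]] : exists r : R, [/\ 0 < r, r < e1 & r * 2 < e2].
  by have [e12|e21] := leP e1 e2; [exists (e1 / 4) | exists (e2 / 4)]; split; lra.
(* P fills more than 3/4 of ball p r and less than 1/4 of ball q (2 r), yet a
   period t close to q - p moves the first ball into the second. *)
have [t Pt tqp] := dense (q - p) r r_gt0.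
have mPB c s : measurable (P `&` ball c s).
  by apply: measurableI => //; exact: measurable_ball.
have ball_shift : fine (mu (P `&` ball (p + t) r)) <= fine (mu (P `&` ball q (r * 2))).
  apply: fine_le; rewrite ?measure_setI_ball_fin //; [exact: ltW | lra |].
  apply: le_measure; rewrite ?inE //; apply: setISS => // z; rewrite /ball /=.
  by move: tqp; rewrite !ltr_norml; lra.
rewrite ae_period_ball // in ball_shift.
have /dense_p : 0 < r < e1 by rewrite r_gt0.
have /sparse_q : 0 < r * 2 < e2 by rewrite re2 andbT; lra.
by move: ball_shift; rewrite !mulr2n; lra.
Qed.

End density.

Lemma approx_by_multiples {R : archiRealFieldType} (eta c : R) : eta != 0 ->
  exists n : int, `|n%:~R * eta - c| < `|eta|.
Proof.
move=> eta_neq0; exists (Num.floor (c / eta)).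
have /andP[fl_le lt_fl] := floor_itv (c / eta); rewrite intrD in lt_fl.
have -> : (Num.floor (c / eta))%:~R * eta - c =
    - (eta * (c / eta - (Num.floor (c / eta))%:~R)).
  by rewrite mulrBr mulrCA divff // mulr1; ring.
rewrite normrN normrM -[ltRHS]mulr1 ltr_pM2l ?normr_gt0 //.
by rewrite ger0_norm ?subr_ge0 //; lra.
Qed.

Lemma truncn_eq_dist {R : archiRealFieldType} (u v : R) : 0 <= u -> 0 <= v ->
  Num.truncn u = Num.truncn v -> `|u - v| < 1.
Proof.
move=> u_ge0 v_ge0 uv; have := truncn_itv u_ge0; have := truncn_itv v_ge0.
by rewrite uv -natr1 ltr_norml; lra.
Qed.

Section kronecker.
Context {R : realType} (y : R).
Hypothesis y_irr : forall d e : int, d != 0 -> d%:~R * y != e%:~R.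

Lemma small_int_combination r : 0 < r ->
  exists d e : int, d%:~R * y - e%:~R != 0 /\ `|d%:~R * y - e%:~R| < r.
Proof.
move=> r_gt0; set n := Num.truncn r^-1.
(* Pigeonhole: n + 2 fractional parts frac (i y) in n + 1 cells of width
   1 / (n + 1) < r. *)
pose g (i : 'I_n.+2) : 'I_n.+1 := inord (Num.truncn (n.+1%:R * frac (i%:R * y))).
have [i [j ij gij]] : exists i, exists2 j, i != j & g i = g j.
  apply/injectivePn/negP => /injectiveP/leq_card.
  by rewrite !card_ord ltnn.
have cell_lt (k : 'I_n.+2) : (Num.truncn (n.+1%:R * frac (k%:R * y)) < n.+1)%N.
  rewrite truncn_lt_nat ?mulr_ge0 ?frac_ge0 //.
  by rewrite -[ltRHS]mulr1 ltr_pM2l ?frac_lt1 ?ltr0n.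
have cell_eq : Num.truncn (n.+1%:R * frac (i%:R * y)) =
               Num.truncn (n.+1%:R * frac (j%:R * y)).
  by move/(congr1 val): gij; rewrite /= !inordK.
set d := j%:Z - i%:Z; set e := Num.floor (j%:R * y) - Num.floor (i%:R * y).
have d_neq0 : d != 0.
  by rewrite subr_eq0 eqz_nat; apply: contra_neq ij => /val_inj.
exists d, e; split; first by rewrite subr_eq0 y_irr.
have -> : d%:~R * y - e%:~R = frac (j%:R * y) - frac (i%:R * y).
  by rewrite /d /e /frac !intrB -!pmulrn; ring.
have n1_gt0 : 0 < n.+1%:R :> R by rewrite ltr0n.
have : `|n.+1%:R * frac (j%:R * y) - n.+1%:R * frac (i%:R * y)| < 1.
  by apply: truncn_eq_dist; rewrite ?mulr_ge0 ?frac_ge0.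
rewrite -mulrBr normrM gtr0_norm // => lt1.
apply: (lt_trans (_ : _ < n.+1%:R^-1)).
  by rewrite -(ltr_pM2l n1_gt0) mulfV ?gt_eqF.
by rewrite -[ltRHS]invrK ltf_pV2 ?posrE ?invr_gt0 //; exact: truncnS_gt.
Qed.

Lemma int_combinations_dense c r : 0 < r ->
  exists k m : int, `|k%:~R * y - m%:~R - c| < r.
Proof.
move=> r_gt0; have [d [e [eta_neq0 eta_lt]]] := small_int_combination r_gt0.
have [n close] := approx_by_multiples c eta_neq0.
exists (n * d), (n * e); apply: lt_trans eta_lt.
suff -> : (n * d)%:~R * y - (n * e)%:~R = n%:~R * (d%:~R * y - e%:~R) by [].
by rewrite !intrM; ring.
Qed.

End kronecker.

Lemma dense_ae_periods {R : realType} (P : set (mR R)) (y : R) :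
  (forall d e : int, d != 0 -> d%:~R * y != e%:~R) ->
  ae_period P 1 -> ae_period P y ->
  forall c r, 0 < r -> exists2 t, ae_period P t & `|t - c| < r.
Proof.
move=> y_irr P1 Py c r r_gt0; have [k [m km]] := int_combinations_dense y_irr c r_gt0.
exists (k%:~R * y - m%:~R) => //.
have -> : k%:~R * y - m%:~R = k%:~R * y + (- m)%:~R * 1 by rewrite mulr1 mulrNz.
exact: ae_periodD (ae_periodMz k Py) (ae_periodMz (- m) P1).
Qed.

Lemma irrationalT_int_mul {R : realType} (x : R) : irrationalT x ->
  forall d e : int, d != 0 -> d%:~R * x != e%:~R.
Proof.
move=> x_irr d e d_neq0; apply: contra_neq (x_irr (e%:Q / d%:Q)) => dxe.
by rewrite fmorph_div /= !ratr_int -dxe mulrC mulKf // intr_eq0.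
Qed.

Section admissible_rotations.
Context {R : realType} (N : nat) (x : R) (A : set (mR R)).
Hypothesis admA : admissible (Dset N x) A.

Let mA : measurable A. Proof. by case: admA. Qed.
Let A01 : A `<=` `[0, 1[. Proof. by case: admA => _ []. Qed.

Let U := \big[setU/set0]_(i < N.+1) rotate (i%:R * x) A.

Let mU : measurable U.
Proof. by apply: bigsetU_measurable => i _; exact: measurable_rotate. Qed.

Let UP z : U z -> exists2 i, (i < N.+1)%N & rotate (i%:R * x) A z.
Proof.
by rewrite /U -(bigcup_mkord _ (fun i => rotate (i%:R * x) A)) => -[i]; exists i.
Qed.

Let U01 : U `<=` `[0, 1[.
Proof. by move=> z /UP[i _ []]. Qed.

Let admissible_measure_fin : lebesgue_measure A \is a fin_num.
Proof.
rewrite ge0_fin_numE // (@le_lt_trans _ _ (lebesgue_measure `[0%R, 1%R[)) //.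
  by apply: le_measure => //; rewrite inE.
by rewrite lebesgue_measure01 ltry.
Qed.

Lemma admissible_not_int a b k : A a -> A b -> (0 < k <= N)%N ->
  a - b - k%:R * x \isn't a Num.int.
Proof.
move=> Aa Ab kN; apply/negP => abk_int; case: admA => _ [_ /(_ a b Aa Ab)]; apply.
exists k => //; apply/frac_eqP.
by rewrite -rpredN opprB.
Qed.

Lemma rotate_disjoint i j : (i < j)%N -> (j - i <= N)%N ->
  rotate (i%:R * x) A `&` rotate (j%:R * x) A = set0.
Proof.
move=> ij jiN; apply/seteqP; split => // z [[_ Ai] [_ Aj]].
move: Ai Aj; rewrite /translate /periodize /= => Ai Aj.
have kN : (0 < j - i <= N)%N by rewrite subn_gt0 ij.
apply: (negP (admissible_not_int Ai Aj kN)).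
have -> : frac (z - i%:R * x) - frac (z - j%:R * x) - (j - i)%N%:R * x =
    (z - j%:R * x - frac (z - j%:R * x)) - (z - i%:R * x - frac (z - i%:R * x)).
  by rewrite natrB ?(ltnW ij) //; ring.
by rewrite rpredB ?subr_frac_int.
Qed.

Lemma measure_rotations : lebesgue_measure U = (fine (lebesgue_measure A) *+ N.+1)%:E.
Proof.
rewrite (@measure_semi_additive_ord_I _ _ _ lebesgue_measure
  (fun k : nat => rotate (k%:R * x) A)) //.
- rewrite (eq_bigr (fun=> lebesgue_measure A)) => [|i _]; last exact: measure_rotate.
  by rewrite -(fineK admissible_measure_fin) sumEFin sumr_const card_ord.
- by move=> k _; exact: measurable_rotate.
- apply/trivIsetP => i j /= iN jN; rewrite neq_ltn => /orP[] ij.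
    by rewrite rotate_disjoint //; lia.
  by rewrite setIC rotate_disjoint //; lia.
Qed.

Lemma admissible_measure_le : (lebesgue_measure A <= (N.+1%:R^-1)%:E)%E.
Proof.
have : (lebesgue_measure U <= lebesgue_measure `[0%R, 1%R[)%E.
  by apply: le_measure; rewrite ?inE.
rewrite measure_rotations lebesgue_measure01 -(fineK admissible_measure_fin).
rewrite !lee_fin /= => le1.
by rewrite -div1r ler_pdivlMr ?ltr0n // mulr_natr.
Qed.

Lemma extremal_rotate_ae_eq : lebesgue_measure A = (N.+1%:R^-1)%:E ->
  lebesgue_measure.-negligible
    ((rotate (N.+1%:R * x) A `\` A) `|` (A `\` rotate (N.+1%:R * x) A)).
Proof.
move=> muA; set y := N.+1%:R * x.
have mRy : measurable (rotate y A) by exact: measurable_rotate.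
have U1 : lebesgue_measure U = 1%E.
  by rewrite measure_rotations muA /= -[_ *+ N.+1]mulr_natr mulVf ?pnatr_eq0.
have gap0 : lebesgue_measure (`[0%R, 1%R[ `\` U) = 0%E.
  by rewrite measureD //= ?lebesgue_measure01 ?ltry // setIidr // U1 subee.
(* rotate y A misses rotate (i x) A for 1 <= i <= N, and rotate 0 A = A. *)
have RA0 : lebesgue_measure (rotate y A `\` A) = 0%E.
  apply/eqP; rewrite -measure_le0 -gap0.
  apply: le_measure; rewrite ?inE; [exact: measurableD | exact: measurableD |].
  move=> z [Ryz nAz]; split; first by case: Ryz.
  move=> /UP[[|i] iN Riz].
    by apply: nAz; rewrite -(rotate0 A01) -(mul0r x).
  have := rotate_disjoint (_ : i.+1 < N.+1)%N (_ : (N.+1 - i.+1 <= N)%N).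
  by rewrite subSS leq_subr => /(_ iN isT)/seteqP[/(_ z) + _]; apply.
have AR0 : lebesgue_measure (A `\` rotate y A) = 0%E.
  apply: (measureD_eq0C mA mRy _ _ RA0); last by rewrite /= muA ltry.
  exact/esym/measure_rotate.
by apply: negligibleU; apply/negligibleP => //; exact: measurableD.
Qed.

End admissible_rotations.

Section periodize_ae.
Context {R : realType} (A : set (mR R)).
Hypotheses (mA : measurable A) (A01 : A `<=` `[0, 1[).

Lemma ae_period_periodize_int r : r \is a Num.int -> ae_period (periodize A) r.
Proof.
by move=> r_int; rewrite /ae_period translate_periodize_int // setDv setU0;
  exact: negligible_set0.
Qed.

Lemma negligible_periodize :
  (@lebesgue_measure R).-negligible (periodize A) -> lebesgue_measure A = 0%E.
Proof.
move=> P0; apply/negligibleP => //; apply: negligibleS P0 => z Az.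
by rewrite -(periodizeI01 A01) in Az; case: Az.
Qed.

Lemma negligible_periodizeC :
  (@lebesgue_measure R).-negligible (~` periodize A) -> lebesgue_measure A = 1%E.
Proof.
move=> P0; have gap0 : lebesgue_measure (`[0%R, 1%R[ `\` A) = 0%E.
  apply/negligibleP; first exact: measurableD.
  apply: negligibleS P0 => z [z01 nAz] PAz; apply: nAz.
  by rewrite -(periodizeI01 A01).
rewrite -lebesgue_measure01 -(setDUK A01) measureU //=; last exact: setDIK.
  by rewrite gap0 adde0.
exact: measurableD.
Qed.

Lemma ae_period_periodize t :
  (@lebesgue_measure R).-negligible ((rotate t A `\` A) `|` (A `\` rotate t A)) ->
  ae_period (periodize A) t.
Proof.
move=> E0; apply: (negligibleS _ (negligible_bigcup_int
  (fun m => negligible_translate m%:~R E0))).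
move=> z Ez; exists (Num.floor z) => //.
have Pw : periodize A (frac z) = periodize A z.
  by rewrite /periodize /= frac_frac.
have Ptw : periodize A (frac z - t) = periodize A (z - t).
  by rewrite /periodize /= frac_fracD.
have Aw : A (frac z) = periodize A (frac z) by rewrite /periodize /= frac_frac.
have z01 : frac z \in `[0, 1[ by rewrite in_itv /= frac_ge0 frac_lt1.
move: Ez; rewrite /translate /rotate /= -/(frac z) /translate /= Ptw Aw Pw.
tauto.
Qed.

End periodize_ae.

Theorem mainTheorem19 (R : realType) (N : nat) (x : R)
    (hN : (0 < N)%N) (hx : irrationalT x) :
  (MdT (Dset N x) <= ((N.+1%:R)^-1)%:E)%E /\
  ~ (exists A : set (measurableTypeR R),
        admissible (Dset N x) A /\ lebesgue_measure A = ((N.+1%:R)^-1)%:E).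
Proof.
split.
  by apply: ge_ereal_sup => _ [A admA <-]; exact: (admissible_measure_le admA).
move=> [A [admA muA]]; have [mA [A01 _]] := admA.
have y_irr (d e : int) : d != 0 -> d%:~R * (N.+1%:R * x) != e%:~R.
  move=> d_neq0; rewrite mulrA -[N.+1%:R]/(N.+1%:~R) -intrM.
  by rewrite irrationalT_int_mul ?mulf_neq0.
have P1 := ae_period_periodize_int A (@rpred1 _ _).
have Py := ae_period_periodize (extremal_rotate_ae_eq admA muA).
have [/(negligible_periodize mA A01)|/(negligible_periodizeC mA A01)] :=
  dense_ae_periods_trivial (measurable_periodize mA A01) (dense_ae_periods y_irr P1 Py).
  by rewrite muA => /eqP; rewrite eqe invr_eq0 pnatr_eq0.
by rewrite muA => /eqP; rewrite eqe invr_eq1 pnatr_eq1 eqSS; lia.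
Qed.
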